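(* With $w_1=\alpha A+bC$, $u=\alpha B+bD$, $w_2=\delta D+cB$, $v=cA+\delta C$ (the entries of $\Omega=\mathsf dT\,T^{-1}$, where $T^{-1}=\begin{pmatrix}A&B\\C&D\end{pmatrix}$), the following hold in $\Gamma$: $w_1\alpha=-\alpha w_1-h\alpha u$, $w_1b=bw_1-hbu$, $w_1c=cw_1-hcu$, $w_1\delta=-\delta w_1-h\delta u$; $u$ commutes with $\alpha,b,c,\delta$; $v\alpha=\alpha v+h\alpha(w_1-w_2)$, $vb=bv-hb(w_1-w_2)$, $vc=cv-hc(w_1-w_2)$, $v\delta=\delta v+h\delta(w_1-w_2)$; $w_2\alpha=-\alpha w_2-h\alpha u$, $w_2b=bw_2-hbu$, $w_2c=cw_2-hcu$, $w_2\delta=-\delta w_2-h\delta u$.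
   Context: Let $h$ be an odd (Grassmann) parameter with $h^2=0$; even elements commute with everything and odd elements anticommute with each other. $\mathcal A$ is the $\mathbb Z_2$-graded algebra generated by even invertible $a,d$ and odd $\beta,\gamma$ ($h$ commuting with $a,d$, anticommuting with $\beta,\gamma$) subject to $a\beta=\beta a$, $a\gamma=\gamma a+h a^2(1-\mathcal D_h^{-1})$, $d\beta=\beta d$, $d\gamma=\gamma d+h d^2(\mathcal D_h-1)$, $\beta^2=0$, $\gamma^2=h\gamma d(1-\mathcal D_h)$, $\beta\gamma=-\gamma\beta+h\beta d(1-\mathcal D_h)$, $ad=da+h\beta d(\mathcal D_h-1)$, with $\mathcal D_h=ad^{-1}-\beta d^{-1}\gamma d^{-1}$; $T=\begin{pmatrix}a&\beta\\ \gamma&d\end{pmatrix}$ and $T^{-1}=\begin{pmatrix}a^{-1}+a^{-1}\beta d^{-1}\gamma a^{-1}&-a^{-1}\beta d^{-1}\\ -d^{-1}\gamma a^{-1}& d^{-1}+d^{-1}\gamma a^{-1}\beta d^{-1}\end{pmatrix}$. The differential algebra $\Gamma$ is the $\mathbb Z_2$-graded algebra generated by $\mathcal A$ together with odd elements $\alpha=\mathsf da,\ \delta=\mathsf dd$ and even elements $b=\mathsf d\beta,\ c=\mathsf d\gamma$ ($h$ anticommutes with $\alpha,\delta$), where $\mathsf d$ is an odd map with $\mathsf d^2=0$, graded Leibniz rule and $\mathsf dh=-h\mathsf d$, subject to the relations $a\alpha=\alpha a+h(\alpha\beta-ba)$, $ab=ba-hb\beta$, $ac=ca+h(\alpha a-c\beta+\delta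 a)$, $a\delta=\delta a+h(ba+\delta\beta)$; $\beta\alpha=-\alpha\beta+hb\beta$, $\beta b=b\beta$, $\beta c=c\beta+h(\alpha+\delta)\beta$, $\beta\delta=-\delta\beta-hb\beta$; $\gamma\alpha=-\alpha\gamma+h(\alpha a+\alpha d+b\gamma)$, $\gamma b=b\gamma+hb(a+d)$, $\gamma c=c\gamma+h(\alpha\gamma+ca+cd+\delta\gamma)$, $\gamma\delta=-\delta\gamma+h(\delta a+\delta d-b\gamma)$; $d\alpha=\alpha d-h(\alpha\beta+bd)$, $db=bd+hb\beta$, $dc=cd+h(\alpha d+c\beta+\delta d)$, $d\delta=\delta d+h(bd-\delta\beta)$; and $\alpha b=b\alpha+hb^2$, $\alpha c=c\alpha+h(cb+\delta\alpha)$, $\delta b=b\delta-hb^2$, $\delta c=c\delta-h(cb-\alpha\delta)$, $\alpha^2=h\alpha b$, $\alpha\delta=-\delta\alpha+h(\delta-\alpha)b$, $\delta^2=-h\delta b$, $bc=cb+h(\delta+\alpha)b$. *)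

From HB Require Import structures.
From mathcomp Require Import all_boot all_order all_algebra.
Set Implicit Arguments. Unset Strict Implicit. Unset Printing Implicit Defensive.
Import GRing.Theory.
Local Open Scope ring_scope.

(* Naming: a, d (even, invertible), be = beta, ga = gamma (odd), h odd
   Grassmann parameter, al = alpha = da, de = delta = dd (odd),
   b = d beta, c = d gamma (even).  ai, di are two-sided inverses of a, d;
   Dhi is a two-sided inverse of D_h. *)

Section Gamma.
Variable (K : fieldType) (G : algType K).

Definition Dh (a d be ga di : G) : G := a * di - be * di * ga * di.

Definition TinvA (a d be ga ai di : G) : G := ai + ai * be * di * ga * ai.
Definition TinvB (a d be ga ai di : G) : G := - (ai * be * di).
Definition TinvC (a d be ga ai di : G) : G := - (di * ga * ai).
Definition TinvD (a d be ga ai di : G) : G := di + di * ga * ai * be * di.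

Definition Gamma_rels (h a d be ga al de b c ai di Dhi : G) : Prop :=
  let D := Dh a d be ga di in
  [/\
  [/\ a * ai = 1, ai * a = 1, d * di = 1, di * d = 1 & (D * Dhi = 1 /\ Dhi * D = 1)],
  [/\ h * h = 0, h * a = a * h, h * d = d * h, h * be = - (be * h)
      & [/\ h * ga = - (ga * h), h * al = - (al * h), h * de = - (de * h),
                                h * b = b * h & h * c = c * h]],
  [/\ a * be = be * a,
      a * ga = ga * a + h * a ^+ 2 * (1 - Dhi),
      d * be = be * d,
      d * ga = ga * d + h * d ^+ 2 * (D - 1)
    & [/\ be ^+ 2 = 0,
          ga ^+ 2 = h * ga * d * (1 - D),
          be * ga = - (ga * be) + h * be * d * (1 - D)
        & a * d = d * a + h * be * d * (D - 1)]],
  [/\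
   [/\ a * al = al * a + h * (al * be - b * a),
       a * b = b * a - h * b * be,
       a * c = c * a + h * (al * a - c * be + de * a)
     & a * de = de * a + h * (b * a + de * be)],
   [/\ be * al = - (al * be) + h * b * be,
       be * b = b * be,
       be * c = c * be + h * (al + de) * be
     & be * de = - (de * be) - h * b * be],
   [/\ ga * al = - (al * ga) + h * (al * a + al * d + b * ga),
       ga * b = b * ga + h * b * (a + d),
       ga * c = c * ga + h * (al * ga + c * a + c * d + de * ga)
     & ga * de = - (de * ga) + h * (de * a + de * d - b * ga)]
   & [/\ d * al = al * d - h * (al * be + b * d),
       d * b = b * d + h * b * be,
       d * c = c * d + h * (al * d + c * be + de * d)
     & d * de = de * d + h * (b * d - de * be)]]
  &
  [/\ al * b = b * al + h * b ^+ 2,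
      al * c = c * al + h * (c * b + de * al),
      de * b = b * de - h * b ^+ 2,
      de * c = c * de - h * (c * b - al * de)
    & [/\ al ^+ 2 = h * al * b,
          al * de = - (de * al) + h * (de - al) * b,
          de ^+ 2 = - (h * de * b)
        & b * c = c * b + h * (de + al) * b]]].

End Gamma.

From HB Require Import structures.
From mathcomp Require Import all_boot all_order all_algebra.
Import GRing.Theory.
Local Open Scope ring_scope.
Set Implicit Arguments. Unset Strict Implicit. Unset Printing Implicit Defensive.

(* Both sides of each identity are expanded into noncommutative polynomials in
   the generators and the inverses [a^-1], [d^-1], [D_h^-1], and reduced by a
   rewriting system: every defining relation of Gamma is oriented as a rule
   [x y -> +-y x + (terms with h)], and the rules for [a^-1], [d^-1] are derived
   from those for [a], [d] by conjugation.  Since [h] supercommutes with every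
   generator and [h^2 = 0], a monomial with two factors [h] vanishes; hence once
   [h] is moved to the front, the rest of the word only matters modulo [h], where
   the algebra is supercommutative and [D_h^-1] has an explicit expression.
   Soundness of the reduction is proved once; each identity then follows by
   computing that the difference of its two sides reduces to [0]. *)

Inductive gen := gH | gA | gD | gBE | gGA | gAL | gDE | gB | gC | gAI | gDI | gDHI.

Definition gen_index g : nat := match g with
  | gH => 0 | gA => 1 | gD => 2 | gBE => 3 | gGA => 4 | gAL => 5
  | gDE => 6 | gB => 7 | gC => 8 | gAI => 9 | gDI => 10 | gDHI => 11 end.

Lemma gen_index_inj : injective gen_index. Proof. by do 2 case. Qed.

HB.instance Definition _ := Equality.copy gen (inj_type gen_index_inj).

Definition odd_gen g := match g with gBE | gGA | gAL | gDE => true | _ => false end.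

Inductive expr := EAt of gen | E0 | E1 | EAdd of expr & expr | EOpp of expr | EMul of expr & expr.
Declare Scope expr_scope. Delimit Scope expr_scope with ex. Bind Scope expr_scope with expr.
Notation "x + y" := (EAdd x y) : expr_scope.
Notation "- x" := (EOpp x) : expr_scope.
Notation "x - y" := (EAdd x (EOpp y)) : expr_scope.
Notation "x * y" := (EMul x y) : expr_scope.

Definition word := seq gen.
Definition ncpoly := seq (int * word).

Definition scale_mono (m : int * word) (q : ncpoly) : ncpoly :=
  [seq (m.1 * n.1, m.2 ++ n.2) | n <- q].
Definition mul_ncpoly (p q : ncpoly) : ncpoly := flatten [seq scale_mono m q | m <- p].
Definition opp_ncpoly (p : ncpoly) : ncpoly := [seq (- m.1, m.2) | m <- p].

Fixpoint ncpoly_of_expr (e : expr) : ncpoly :=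
  match e with
  | EAt g => [:: (1, [:: g])]
  | E0 => [::]
  | E1 => [:: (1, [::])]
  | EAdd e1 e2 => ncpoly_of_expr e1 ++ ncpoly_of_expr e2
  | EOpp e1 => opp_ncpoly (ncpoly_of_expr e1)
  | EMul e1 e2 => mul_ncpoly (ncpoly_of_expr e1) (ncpoly_of_expr e2)
  end.

(* [Swap s e] at [(x, y)] reads [x y = (-1)^s y x + e], [Repl e] reads [x y = e]. *)
Inductive rewrite_rule := Swap of bool & expr | Repl of expr.

Definition signed {R : nzRingType} (s : bool) (v : R) := if s then - v else v.

Lemma signedMl {R : nzRingType} s (u v : R) : signed s u * v = signed s (u * v).
Proof. by case: s => //=; rewrite mulNr. Qed.

Lemma signedMr {R : nzRingType} s (u v : R) : u * signed s v = signed s (u * v).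
Proof. by case: s => //=; rewrite mulrN. Qed.

Lemma signed_signed {R : nzRingType} s t (u : R) : signed s (signed t u) = signed (s (+) t) u.
Proof. by case: s; case: t => //=; rewrite opprK. Qed.

Lemma signed0 {R : nzRingType} s : signed s (0 : R) = 0.
Proof. by case: s => //=; rewrite oppr0. Qed.

Definition signed_expr (s : bool) (e : expr) := if s then EOpp e else e.

Definition inv_rule (yi : gen) (r : rewrite_rule) : option rewrite_rule :=
  if r is Swap s e then Some (Swap s (signed_expr s (- (EAt yi * e * EAt yi))%ex))
  else None.

Definition ncpoly_of_rule x y (r : rewrite_rule) : ncpoly :=
  match r with
  | Swap s e => ((if s then -1 else 1), [:: y; x]) :: ncpoly_of_expr e
  | Repl e => ncpoly_of_expr e
  end.

Definition append_word (p : ncpoly) (rest : word) : ncpoly := [seq (m.1, m.2 ++ rest) | m <- p].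
Definition prepend_gen x (p : ncpoly) : ncpoly := [seq (m.1, x :: m.2) | m <- p].
Definition has_h (m : int * word) := gH \in m.2.

Section Normalizer.
Variables (rules : gen -> gen -> option rewrite_rule) (dhi : option ncpoly).

(* While a word contains [h], only the rules moving [h] leftwards are applied,
   until the word has the form [h w]. *)
Fixpoint step_plain (h_only : bool) (w : word) : option ncpoly :=
  match w with
  | x :: (y :: rest) as t =>
    match (if h_only && (y != gH) then None else rules x y) with
    | Some r => Some (append_word (ncpoly_of_rule x y r) rest)
    | None => omap (prepend_gen x) (step_plain h_only t)
    end
  | _ => None
  end.

(* Rewrites a word [w] standing to the right of [h]: monomials containing a
   second [h] vanish, and [dhi] may be substituted for [Dhi]. *)
Fixpoint step_under_h (w : word) : option ncpoly :=
  match w with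
  | x :: t =>
    match (if x == gDHI then dhi else None) with
    | Some q => Some (append_word q t)
    | None =>
      match t with
      | y :: rest =>
        match rules x y with
        | Some r => Some (append_word [seq m <- ncpoly_of_rule x y r | ~~ has_h m] rest)
        | None => omap (prepend_gen x) (step_under_h t)
        end
      | [::] => None
      end
    end
  | [::] => None
  end.

Definition step (w : word) : option ncpoly :=
  if w is gH :: t then omap (prepend_gen gH) (step_under_h t) else step_plain (gH \in w) w.

Fixpoint reduce (fuel : nat) (p : ncpoly) : ncpoly :=
  if fuel is n.+1 then
    flatten [seq if step m.2 is Some q then reduce n (scale_mono (m.1, [::]) q) else [:: m]
            | m <- p]
  else p.

Fixpoint add_mono (m : int * word) (p : ncpoly) : ncpoly :=
  match p with
  | [::] => [:: m]
  | m' :: t => if m'.2 == m.2 then (m'.1 + m.1, m'.2) :: t else m' :: add_mono m t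
  end.

Definition collect (p : ncpoly) : ncpoly := [seq m <- foldr add_mono [::] p | m.1 != 0].

Definition normal_form (e : expr) : ncpoly := collect (reduce 200 (ncpoly_of_expr e)).

Section Soundness.
Variables (R : nzRingType) (env : gen -> R).

Fixpoint eval_expr (e : expr) : R :=
  match e with
  | EAt g => env g
  | E0 => 0
  | E1 => 1
  | EAdd e1 e2 => eval_expr e1 + eval_expr e2
  | EOpp e1 => - eval_expr e1
  | EMul e1 e2 => eval_expr e1 * eval_expr e2
  end.

Definition eval_word (w : word) : R := \prod_(g <- w) env g.
Definition eval_ncpoly (p : ncpoly) : R := \sum_(m <- p) eval_word m.2 *~ m.1.

Lemma eval_word_cat w1 w2 : eval_word (w1 ++ w2) = eval_word w1 * eval_word w2.
Proof. exact: big_cat. Qed.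

Lemma eval_word0 : eval_word [::] = 1.
Proof. exact: big_nil. Qed.

Lemma eval_word1 g : eval_word [:: g] = env g.
Proof. exact: big_seq1. Qed.

Lemma eval_word_cons g w : eval_word (g :: w) = env g * eval_word w.
Proof. exact: big_cons. Qed.

Lemma eval_ncpoly_nil : eval_ncpoly [::] = 0.
Proof. exact: big_nil. Qed.

Lemma eval_ncpoly_cons m p : eval_ncpoly (m :: p) = eval_word m.2 *~ m.1 + eval_ncpoly p.
Proof. exact: big_cons. Qed.

Lemma eval_ncpoly_cat p q : eval_ncpoly (p ++ q) = eval_ncpoly p + eval_ncpoly q.
Proof. exact: big_cat. Qed.

Lemma eval_ncpoly_flatten ps : eval_ncpoly (flatten ps) = \sum_(p <- ps) eval_ncpoly p.
Proof.
elim: ps => [|p ps IH]; first by rewrite big_nil /eval_ncpoly big_nil.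
by rewrite big_cons eval_ncpoly_cat IH.
Qed.

Lemma eval_opp_ncpoly p : eval_ncpoly (opp_ncpoly p) = - eval_ncpoly p.
Proof. by rewrite /eval_ncpoly big_map -sumrN; apply: eq_bigr => m _; rewrite mulrNz. Qed.

Lemma eval_scale_mono m q : eval_ncpoly (scale_mono m q) = eval_word m.2 *~ m.1 * eval_ncpoly q.
Proof.
rewrite /eval_ncpoly big_map mulr_sumr; apply: eq_bigr => n _ /=.
by rewrite eval_word_cat mulrzAl mulrzAr mulrzA_C.
Qed.

Lemma eval_mul_ncpoly p q : eval_ncpoly (mul_ncpoly p q) = eval_ncpoly p * eval_ncpoly q.
Proof.
rewrite eval_ncpoly_flatten big_map [in RHS]/eval_ncpoly mulr_suml.
by apply: eq_bigr => m _; rewrite eval_scale_mono.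
Qed.

Lemma eval_ncpoly_of_expr e : eval_ncpoly (ncpoly_of_expr e) = eval_expr e.
Proof.
elim: e => [g| | |e1 IH1 e2 IH2|e1 IH1|e1 IH1 e2 IH2] /=.
- by rewrite /eval_ncpoly big_seq1 /eval_word big_seq1.
- by rewrite /eval_ncpoly big_nil.
- by rewrite /eval_ncpoly big_seq1 /eval_word big_nil.
- by rewrite eval_ncpoly_cat IH1 IH2.
- by rewrite eval_opp_ncpoly IH1.
- by rewrite eval_mul_ncpoly IH1 IH2.
Qed.

Definition rule_holds x y (r : rewrite_rule) : Prop :=
  match r with
  | Swap s e => env x * env y = signed s (env y * env x) + eval_expr e
  | Repl e => env x * env y = eval_expr e
  end.

Lemma eval_ncpoly_of_rule x y r :
  rule_holds x y r -> env x * env y = eval_ncpoly (ncpoly_of_rule x y r).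
Proof.
case: r => [s e|e] /= ->; rewrite ?eval_ncpoly_cons eval_ncpoly_of_expr //.
by rewrite !eval_word_cons /eval_word big_nil mulr1; case: s; rewrite ?mulrN1z.
Qed.

Lemma inv_rule_right x y yi r r' : rule_holds x y r ->
  env y * env yi = 1 -> env yi * env y = 1 -> inv_rule yi r = Some r' -> rule_holds x yi r'.
Proof.
case: r => [s e|e] Hxy y_yi yi_y //= [<-] /=.
have {}Hxy : env yi * env x = signed s (env x * env yi) + env yi * eval_expr e * env yi.
  rewrite -[env yi * env x]mulr1 -y_yi mulrA -(mulrA _ (env x)) Hxy.
  by case: s {Hxy} => /=; rewrite mulrDr mulrDl ?mulrN ?mulNr !mulrA yi_y mul1r.
by case: s Hxy => /= ->; rewrite ?opprD ?opprK ?subrK ?addrK.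
Qed.

Lemma inv_rule_left x xi y r r' : rule_holds x y r ->
  env x * env xi = 1 -> env xi * env x = 1 -> inv_rule xi r = Some r' -> rule_holds xi y r'.
Proof.
case: r => [s e|e] Hxy x_xi xi_x //= [<-] /=.
have {}Hxy : env y * env xi = signed s (env xi * env y) + env xi * eval_expr e * env xi.
  rewrite -[env y * env xi]mul1r -xi_x -!mulrA (mulrA (env x)) Hxy.
  by case: s {Hxy} => /=; rewrite mulrDl mulrDr ?mulrN ?mulNr -!mulrA x_xi mulr1 !mulrA ?mulrN.
by case: s Hxy => /= ->; rewrite ?opprD ?opprK ?subrK ?addrK.
Qed.

Lemma eval_append_word p rest :
  eval_ncpoly (append_word p rest) = eval_ncpoly p * eval_word rest.
Proof.
rewrite /eval_ncpoly big_map mulr_suml; apply: eq_bigr => m _ /=.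
by rewrite eval_word_cat mulrzAl.
Qed.

Lemma eval_prepend_gen x p : eval_ncpoly (prepend_gen x p) = env x * eval_ncpoly p.
Proof.
rewrite /eval_ncpoly big_map mulr_sumr; apply: eq_bigr => m _ /=.
by rewrite eval_word_cons mulrzAr.
Qed.

Lemma eval_ncpoly_split_h p : eval_ncpoly p =
  eval_ncpoly [seq m <- p | ~~ has_h m] + eval_ncpoly [seq m <- p | has_h m].
Proof. by rewrite /eval_ncpoly !big_filter [LHS](bigID has_h) addrC. Qed.

Hypothesis rules_ok : forall x y r, rules x y = Some r -> rule_holds x y r.
Hypothesis h_parity : forall g, env gH * env g = signed (odd_gen g) (env g * env gH).
Hypothesis h_sq : env gH * env gH = 0.
Hypothesis dhi_ok : forall q, dhi = Some q -> env gH * env gDHI = env gH * eval_ncpoly q.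

Lemma step_plain_sound h_only w p :
  step_plain h_only w = Some p -> eval_word w = eval_ncpoly p.
Proof.
elim: w p => [|x t IH] p //=; case: t IH => [|y rest] IH //.
case E: (if _ then None else rules x y) => [r|].
  have Hr : rule_holds x y r by move: E; case: ifP => // _ /rules_ok.
  case=> <-; rewrite eval_append_word -eval_ncpoly_of_rule //.
  by rewrite !eval_word_cons mulrA.
case E': (step_plain _ _) => [q|] //= [<-].
by rewrite eval_prepend_gen -(IH _ E') eval_word_cons.
Qed.

Lemma h_comm_word w : exists s, env gH * eval_word w = signed s (eval_word w * env gH).
Proof.
elim: w => [|g w [s IH]]; first by exists false; rewrite eval_word0 mulr1 mul1r.
exists (odd_gen g (+) s).
by rewrite eval_word_cons mulrA h_parity signedMl -mulrA IH signedMr signed_signed mulrA.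
Qed.

Lemma h_mul_word_congr q (X Y : R) :
  env gH * X = env gH * Y -> env gH * eval_word q * X = env gH * eval_word q * Y.
Proof. by move=> hXY; have [s ->] := h_comm_word q; rewrite !signedMl -!mulrA hXY. Qed.

(* [h] supercommutes with every word, so a second [h] meets the first and [h^2 = 0]. *)
Lemma h_mul_word_h q m : gH \in m -> env gH * eval_word q * eval_word m = 0.
Proof.
case/splitPr=> m1 m2; rewrite eval_word_cat eval_word_cons mulrA.
rewrite -(mulrA (env gH)) -eval_word_cat; have [s ->] := h_comm_word (q ++ m1).
by rewrite signedMl -mulrA (mulrA (env gH)) h_sq mul0r mulr0 signed0.
Qed.

Lemma h_mul_word_ncpoly q p : all has_h p -> env gH * eval_word q * eval_ncpoly p = 0.
Proof.
move=> /allP hp; rewrite /eval_ncpoly mulr_sumr big1_seq // => m /andP[_ /hp hm].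
by rewrite mulrzAr h_mul_word_h ?mul0rz.
Qed.

Lemma step_under_h_sound w p : step_under_h w = Some p ->
  forall q, env gH * eval_word q * eval_word w = env gH * eval_word q * eval_ncpoly p.
Proof.
elim: w p => [|x t IH] p //=.
case Edhi: (if x == gDHI then dhi else None) => [q0|].
  move: Edhi; case: eqP => // -> /dhi_ok hq [<-] q.
  by rewrite eval_append_word eval_word_cons !mulrA (h_mul_word_congr q hq).
case: t IH => [|y rest] IH //.
case Er: (rules x y) => [r|].
  have Hr := rules_ok Er; case=> <- q; rewrite eval_append_word.
  have -> : eval_word [:: x, y & rest] = eval_ncpoly (ncpoly_of_rule x y r) * eval_word rest.
    by rewrite -eval_ncpoly_of_rule // !eval_word_cons mulrA.
  rewrite (eval_ncpoly_split_h (ncpoly_of_rule x y r)) mulrDl mulrDr.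
  rewrite -[eval_ncpoly [seq m <- _ | has_h m] * _]eval_append_word h_mul_word_ncpoly ?addr0 //.
  rewrite all_map; apply/allP => m; rewrite mem_filter => /andP[hm _].
  by move: hm; rewrite /has_h /= mem_cat => ->.
case E: (step_under_h _) => [p'|] //= [<-] q.
have := IH _ E (q ++ [:: x]).
by rewrite eval_word_cat eval_word1 eval_prepend_gen !eval_word_cons !mulrA.
Qed.

Lemma step_sound w p : step w = Some p -> eval_word w = eval_ncpoly p.
Proof.
case: w => [|[] t] //; try exact: step_plain_sound.
rewrite /=; case E: (step_under_h t) => [q|] //= [<-].
have := step_under_h_sound E [::].
by rewrite eval_word0 !mulr1 eval_word_cons eval_prepend_gen.
Qed.

Lemma reduce_sound n p : eval_ncpoly (reduce n p) = eval_ncpoly p.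
Proof.
elim: n p => [|n IH] p //=.
rewrite eval_ncpoly_flatten big_map [in RHS]/eval_ncpoly; apply: eq_bigr => m _.
case E: (step m.2) => [q|]; last by rewrite eval_ncpoly_cons eval_ncpoly_nil addr0.
by rewrite IH eval_scale_mono eval_word0 (step_sound E) mulrzAl mul1r.
Qed.

Lemma eval_add_mono m p : eval_ncpoly (add_mono m p) = eval_word m.2 *~ m.1 + eval_ncpoly p.
Proof.
elim: p => [|m' p IH] /=; first by rewrite eval_ncpoly_cons.
case: eqP => [E|_]; rewrite !eval_ncpoly_cons /=.
  by rewrite mulrzDr E addrA (addrC (eval_word m.2 *~ m.1)).
by rewrite IH addrCA.
Qed.

Lemma collect_sound p : eval_ncpoly (collect p) = eval_ncpoly p.
Proof.
have -> : eval_ncpoly p = eval_ncpoly (foldr add_mono [::] p).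
  by elim: p => [|m p IH] //=; rewrite eval_add_mono -IH eval_ncpoly_cons.
rewrite /collect /eval_ncpoly big_filter big_mkcond; apply: eq_bigr => m _.
by case: eqP => // ->; rewrite mulr0z.
Qed.

Lemma normal_form_sound e1 e2 :
  normal_form (e1 - e2)%ex = [::] -> eval_expr e1 = eval_expr e2.
Proof.
move=> nf0; apply/eqP; rewrite -subr_eq0.
have <- : eval_ncpoly (normal_form (e1 - e2)%ex) = eval_expr e1 - eval_expr e2.
  by rewrite collect_sound reduce_sound eval_ncpoly_of_expr.
by rewrite nf0 eval_ncpoly_nil.
Qed.

End Soundness.
End Normalizer.

Lemma commr_inv {R : nzRingType} (y x xi : R) :
  GRing.comm y x -> x * xi = 1 -> xi * x = 1 -> GRing.comm y xi.
Proof.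
rewrite /GRing.comm => yx x_xi xi_x.
by rewrite -[y * xi]mul1r -xi_x -mulrA (mulrA x) -yx -!mulrA x_xi mulr1.
Qed.

Section Gamma.
Variables (K : fieldType) (G : algType K) (h a d be ga al de b c ai di Dhi : G).
Hypothesis rels : Gamma_rels h a d be ga al de b c ai di Dhi.

Definition gamma_env g : G :=
  match g with
  | gH => h | gA => a | gD => d | gBE => be | gGA => ga | gAL => al
  | gDE => de | gB => b | gC => c | gAI => ai | gDI => di | gDHI => Dhi
  end.

Notation h_ := (EAt gH). Notation a_ := (EAt gA). Notation d_ := (EAt gD).
Notation be_ := (EAt gBE). Notation ga_ := (EAt gGA). Notation al_ := (EAt gAL).
Notation de_ := (EAt gDE). Notation b_ := (EAt gB). Notation c_ := (EAt gC).
Notation ai_ := (EAt gAI). Notation di_ := (EAt gDI). Notation dhi_ := (EAt gDHI).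

Definition Dh_expr := (a_ * di_ - be_ * di_ * ga_ * di_)%ex.

(* Modulo [h] the algebra is supercommutative, and there
   [D_h^-1 = d a^-1 + beta gamma a^-2]. *)
Definition Dh_inv_mod_h := (d_ * ai_ + be_ * ga_ * ai_ * ai_)%ex.

Definition gamma_base (x y : gen) : option rewrite_rule :=
  match x, y with
  | gH, gH => Some (Repl E0)
  | _, gH => Some (Swap (odd_gen x) E0)
  | gB, gC => Some (Swap false (h_ * (de_ + al_) * b_))
  | gDE, gC => Some (Swap false (- (h_ * (c_ * b_ - al_ * de_))))
  | gDE, gB => Some (Swap false (- (h_ * (b_ * b_))))
  | gAL, gC => Some (Swap false (h_ * (c_ * b_ + de_ * al_)))
  | gAL, gB => Some (Swap false (h_ * (b_ * b_)))
  | gAL, gDE => Some (Swap true (h_ * (de_ - al_) * b_))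
  | gAL, gAL => Some (Repl (h_ * al_ * b_))
  | gDE, gDE => Some (Repl (- (h_ * de_ * b_)))
  | gGA, gAL => Some (Swap true (h_ * (al_ * a_ + al_ * d_ + b_ * ga_)))
  | gGA, gB => Some (Swap false (h_ * b_ * (a_ + d_)))
  | gGA, gC => Some (Swap false (h_ * (al_ * ga_ + c_ * a_ + c_ * d_ + de_ * ga_)))
  | gGA, gDE => Some (Swap true (h_ * (de_ * a_ + de_ * d_ - b_ * ga_)))
  | gBE, gAL => Some (Swap true (h_ * b_ * be_))
  | gBE, gB => Some (Swap false E0)
  | gBE, gC => Some (Swap false (h_ * (al_ + de_) * be_))
  | gBE, gDE => Some (Swap true (- (h_ * b_ * be_)))
  | gD, gAL => Some (Swap false (- (h_ * (al_ * be_ + b_ * d_))))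
  | gD, gB => Some (Swap false (h_ * b_ * be_))
  | gD, gC => Some (Swap false (h_ * (al_ * d_ + c_ * be_ + de_ * d_)))
  | gD, gDE => Some (Swap false (h_ * (b_ * d_ - de_ * be_)))
  | gA, gAL => Some (Swap false (h_ * (al_ * be_ - b_ * a_)))
  | gA, gB => Some (Swap false (- (h_ * b_ * be_)))
  | gA, gC => Some (Swap false (h_ * (al_ * a_ - c_ * be_ + de_ * a_)))
  | gA, gDE => Some (Swap false (h_ * (b_ * a_ + de_ * be_)))
  | gBE, gGA => Some (Swap true (h_ * be_ * d_ * (E1 - Dh_expr)))
  | gD, gGA => Some (Swap false (h_ * (d_ * d_) * (Dh_expr - E1)))
  | gD, gBE => Some (Swap false E0)
  | gA, gGA => Some (Swap false (h_ * (a_ * a_) * (E1 - dhi_)))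
  | gA, gBE => Some (Swap false E0)
  | gA, gD => Some (Swap false (h_ * be_ * d_ * (Dh_expr - E1)))
  | gBE, gBE => Some (Repl E0)
  | gGA, gGA => Some (Repl (h_ * ga_ * d_ * (E1 - Dh_expr)))
  | gA, gAI | gAI, gA | gD, gDI | gDI, gD => Some (Repl E1)
  | _, _ => None
  end.

Definition gamma_rules_di (x y : gen) : option rewrite_rule :=
  if gamma_base x y is Some r then Some r else
  match x, y with
  | gA, gDI => obind (inv_rule gDI) (gamma_base gA gD)
  | gDI, _ => obind (inv_rule gDI) (gamma_base gD y)
  | _, _ => None
  end.

Definition gamma_rules (x y : gen) : option rewrite_rule :=
  if gamma_rules_di x y is Some r then Some r else
  if x is gAI then obind (inv_rule gAI) (gamma_rules_di gA y) else None.

Lemma h_comm_Dh : GRing.comm h (Dh a d be ga di).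
Proof.
have [[_ _ ddi did _] [_ ha hd hbe [hga _ _ _ _]] _ _ _] := rels.
have hdi := commr_inv hd ddi did.
rewrite /GRing.comm /Dh mulrBr mulrBl !mulrA ha -(mulrA a) hdi mulrA; congr (_ - _).
rewrite hbe !mulNr -(mulrA be h) hdi mulrA -(mulrA _ h ga) hga mulrN !mulNr opprK !mulrA.
by rewrite -(mulrA _ h di) hdi mulrA.
Qed.

Lemma gamma_h_parity g :
  gamma_env gH * gamma_env g = signed (odd_gen g) (gamma_env g * gamma_env gH).
Proof.
have [[aai aia ddi did [DDhi DhiD]] [_ ha hd hbe [hga hal hde hb hc]] _ _ _] := rels.
have hai := commr_inv ha aai aia; have hdi := commr_inv hd ddi did.
have hDhi := commr_inv h_comm_Dh DDhi DhiD.
by case: g => /=.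
Qed.

Lemma gamma_base_ok x y r : gamma_base x y = Some r -> rule_holds gamma_env x y r.
Proof.
have [[aai aia ddi did [DDhi DhiD]] [hh ha hd hbe [hga hal hde hb hc]]
  [abe aga dbe dga [be2 ga2 bega ad]]
  [[aal ab ac ade] [beal beb bec bede] [gaal gab gac gade] [dal db dc dde]]
  [alb alc deb dec [al2 alde de2 bc]]] := rels.
have hai := commr_inv ha aai aia; have hdi := commr_inv hd ddi did.
have hDhi := commr_inv h_comm_Dh DDhi DhiD.
case: x; case: y => //= [] [<-] /=.
all: rewrite ?addr0 -?expr2.
all: try first [ done | assumption | by rewrite -?ga2 ?expr2 ].
all: by rewrite ?hde ?hal ?hga ?hbe ?hdi ?hai ?hDhi ?opprK.
Qed.

Lemma gamma_rules_ok x y r : gamma_rules x y = Some r -> rule_holds gamma_env x y r.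
Proof.
have [[aai aia ddi did _] _ _ _ _] := rels.
have rules_di_ok x' y' r' : gamma_rules_di x' y' = Some r' -> rule_holds gamma_env x' y' r'.
  rewrite /gamma_rules_di; case Eb: (gamma_base x' y') => [r1|].
    by case=> <-; exact: gamma_base_ok.
  case: x' Eb => // [|_].
    case: y' => // _; case Ead: (gamma_base gA gD) => [rad|] //=.
    exact: (inv_rule_right (yi := gDI) (gamma_base_ok Ead) ddi did).
  case Edy: (gamma_base gD y') => [rdy|] //=.
  exact: (inv_rule_left (xi := gDI) (gamma_base_ok Edy) ddi did).
rewrite /gamma_rules; case E: (gamma_rules_di x y) => [r1|].
  by case=> <-; exact: rules_di_ok.
case: x E => // _; case Eay: (gamma_rules_di gA y) => [ray|] //=.
exact: (inv_rule_left (xi := gAI) (rules_di_ok _ _ _ Eay) aai aia).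
Qed.

Lemma h_mul_Dhi : h * Dhi = h * eval_expr gamma_env Dh_inv_mod_h.
Proof.
have [[_ _ _ _ [DDhi DhiD]] [hh _ _ _ _] _ _ _] := rels.
have hDhi := commr_inv h_comm_Dh DDhi DhiD.
have hDX : eval_expr gamma_env (h_ * (Dh_expr * Dh_inv_mod_h))%ex = eval_expr gamma_env h_.
  apply: (normal_form_sound (dhi := None) gamma_rules_ok gamma_h_parity hh); first by [].
  by vm_compute.
move: hDX => /= hDX.
by rewrite hDhi -[in Dhi * h]hDX (mulrA h) h_comm_Dh !mulrA DhiD mul1r.
Qed.

Lemma gamma_identity e1 e2 :
  normal_form gamma_rules (Some (ncpoly_of_expr Dh_inv_mod_h)) (e1 - e2)%ex = [::] ->
  eval_expr gamma_env e1 = eval_expr gamma_env e2.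
Proof.
have [_ [hh _ _ _ _] _ _ _] := rels.
apply: (normal_form_sound gamma_rules_ok gamma_h_parity hh) => _ /Some_inj <-.
by rewrite eval_ncpoly_of_expr h_mul_Dhi.
Qed.

End Gamma.

Ltac reify_gen env t gs :=
  lazymatch gs with
  | ?g :: ?gs' =>
    let v := eval cbv beta iota delta [gamma_env] in (env g) in
    lazymatch v with
    | t => constr:(EAt g)
    | _ => reify_gen env t gs'
    end
  end.

Ltac reify_gamma env t :=
  lazymatch t with
  | ?x + ?y => let ex := reify_gamma env x in let ey := reify_gamma env y in constr:(EAdd ex ey)
  | - ?x => let ex := reify_gamma env x in constr:(EOpp ex)
  | ?x * ?y => let ex := reify_gamma env x in let ey := reify_gamma env y in constr:(EMul ex ey)
  | _ => reify_gen env t constr:([:: gH; gA; gD; gBE; gGA; gAL; gDE; gB; gC; gAI; gDI; gDHI])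
  end.

Ltac gamma_solve rels :=
  lazymatch type of rels with
  | Gamma_rels ?h ?a ?d ?be ?ga ?al ?de ?b ?c ?ai ?di ?Dhi =>
    let env := constr:(gamma_env h a d be ga al de b c ai di Dhi) in
    lazymatch goal with
    | |- ?lhs = ?rhs =>
      let e1 := reify_gamma env lhs in
      let e2 := reify_gamma env rhs in
      apply: (gamma_identity rels (e1 := e1) (e2 := e2)); vm_compute; reflexivity
    end
  end.

Theorem mainTheorem8 (K : fieldType) (G : algType K)
    (charK : [pchar K] =i pred0)
    (h a d be ga al de b c ai di Dhi : G) :
  Gamma_rels h a d be ga al de b c ai di Dhi ->
  let A := TinvA a d be ga ai di in
  let B := TinvB a d be ga ai di in
  let C := TinvC a d be ga ai di in
  let D := TinvD a d be ga ai di in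
  let w1 := al * A + b * C in
  let u  := al * B + b * D in
  let w2 := de * D + c * B in
  let v  := c * A + de * C in
  [/\
   [/\ w1 * al = - (al * w1) - h * al * u,
       w1 * b = b * w1 - h * b * u,
       w1 * c = c * w1 - h * c * u
     & w1 * de = - (de * w1) - h * de * u],
   [/\ u * al = al * u, u * b = b * u, u * c = c * u & u * de = de * u],
   [/\ v * al = al * v + h * al * (w1 - w2),
       v * b = b * v - h * b * (w1 - w2),
       v * c = c * v - h * c * (w1 - w2)
     & v * de = de * v + h * de * (w1 - w2)]
  & [/\ w2 * al = - (al * w2) - h * al * u,
       w2 * b = b * w2 - h * b * u,
       w2 * c = c * w2 - h * c * u
     & w2 * de = - (de * w2) - h * de * u]].
Proof.
move=> rels; cbv beta zeta delta [TinvA TinvB TinvC TinvD].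
by split; split; gamma_solve rels.
Qed.
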